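(* Let $Id_{Gr}\colon Gr\to Gr$ be the identity functor of the category of groups. There is a natural isomorphism of bifunctors $Gr\times Gr\to Ab$ $$\Gamma_{11}\colon G^{ab}\otimes H^{ab}\xrightarrow{\simeq}T_{11}cr_2(Id_{Gr})(G,H)$$ such that $\Gamma_{11}(\bar g\otimes\bar h)=t_{11}([i_1g,i_2h])$ for $g\in G$, $h\in H$.
   Context: Notation. - $G\vee H=G*H$ is the free product, with injections $i_1,i_2$ and retractions $r_1,r_2$. - $[a,b]=aba^{-1}b^{-1}$, and $G^{ab}=G/[G,G]$ with $\bar g$ the class of $g$. Cross-effects and bilinearization. - For a reduced functor $F\colon Gr\to Gr$, $cr_2F(G,H)=\ker(F(G*H)\to F(G)\times F(H))$ (induced by $r_1,r_2$), a normal subgroup of $F(G*H)$. - For a bireduced bifunctor $B$ to groups, $T_{11}B(G,H)$ is the quotient of $B(G,H)$ by the (normal) subgroup $N_1N_2$, where $N_1$ is the image of $cr_2(B(-,H))(G,G)\subseteq B(G*G,H)$ under $B(\nabla,1)$ and $N_2$ is the image of $cr_2(B(G,-))(H,H)$ under $B(1,\nabla)$; here $\nabla$ is the folding map. $t_{11}$ is the projection. *)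

(* arbitrary (possibly infinite) groups, free products,
   abelianizations and tensor products are built by hand as setoid groups
   (carrier + equivalence + operations) presented by generators/relations. *)
From Stdlib Require Import List.
Import ListNotations.
Set Implicit Arguments.
Unset Strict Implicit.

Record group := Group {
  gcar :> Type;
  gmul : gcar -> gcar -> gcar;
  gone : gcar;
  ginv : gcar -> gcar;
  gmulA : forall x y z, gmul x (gmul y z) = gmul (gmul x y) z;
  gmul1 : forall x, gmul gone x = x;
  gmulV : forall x, gmul (ginv x) x = gone }.
Arguments gmul : clear implicits.
Arguments gone : clear implicits.
Arguments ginv : clear implicits.

Record hom (G H : group) := Hom {
  hfun :> G -> H;
  hmulP : forall x y, hfun (gmul G x y) = gmul H (hfun x) (hfun y) }.

(** Setoid presentations of groups: elements are representatives, [sgeq] is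
    the equality of the group. *)
Record sgrp := SGrp {
  scar :> Type;
  sgeq : scar -> scar -> Prop;
  smul : scar -> scar -> scar;
  sone : scar;
  sinv : scar -> scar }.
Arguments sgeq {s} _ _.
Arguments smul {s} _ _.
Arguments sone {s}.
Arguments sinv {s} _.

Definition scomm (K : sgrp) (a b : K) : K :=
  smul (smul (smul a b) (sinv a)) (sinv b).

Definition to_s (G : group) : sgrp := @SGrp (gcar G) eq (gmul G) (gone G) (ginv G).

(** Free product G * H : words in G + H modulo the usual relations *)
Inductive fp_rel (A B : sgrp) : list (A + B) -> list (A + B) -> Prop :=
| fp_refl w : @fp_rel A B w w
| fp_sym w1 w2 : @fp_rel A B w1 w2 -> @fp_rel A B w2 w1
| fp_trans w1 w2 w3 : @fp_rel A B w1 w2 -> @fp_rel A B w2 w3 -> @fp_rel A B w1 w3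
| fp_cong u v w1 w2 : @fp_rel A B w1 w2 -> @fp_rel A B (u ++ w1 ++ v) (u ++ w2 ++ v)
| fp_eql (a a' : A) : sgeq a a' -> @fp_rel A B [inl a] [inl a']
| fp_eqr (b b' : B) : sgeq b b' -> @fp_rel A B [inr b] [inr b']
| fp_onel : @fp_rel A B [inl sone] []
| fp_oner : @fp_rel A B [inr sone] []
| fp_mull (a a' : A) : @fp_rel A B [inl a; inl a'] [inl (smul a a')]
| fp_mulr (b b' : B) : @fp_rel A B [inr b; inr b'] [inr (smul b b')].

Definition linv (A B : sgrp) (l : A + B) : A + B :=
  match l with inl a => inl (sinv a) | inr b => inr (sinv b) end.

Definition FP (A B : sgrp) : sgrp :=
  @SGrp (list (A + B)) (@fp_rel A B) (@app _) nil
       (fun w => rev (map (@linv A B) w)).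

Definition i1 (A B : sgrp) (a : A) : FP A B := [inl a].
Definition i2 (A B : sgrp) (b : B) : FP A B := [inr b].

Definition eval2 (A B K : sgrp) (f : A -> K) (g : B -> K) (w : FP A B) : K :=
  fold_right (fun l acc => smul (match l with inl a => f a | inr b => g b end) acc)
             sone w.

Definition r1 (A B : sgrp) (w : FP A B) : A := eval2 (fun a => a) (fun _ => sone) w.
Definition r2 (A B : sgrp) (w : FP A B) : B := eval2 (fun _ => sone) (fun b => b) w.
Definition nabla (A : sgrp) (w : FP A A) : A := eval2 (fun a => a) (fun a => a) w.

Definition fpmap (A B A' B' : sgrp) (f : A -> A') (g : B -> B') (w : FP A B)
  : FP A' B' :=
  map (fun l => match l with inl a => inl (f a) | inr b => inr (g b) end) w.

(** cr_2(Id)(A,B) = ker (A * B -> A x B), as a predicate on A * B *)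
Definition Bker (A B : sgrp) (x : FP A B) : Prop :=
  sgeq (r1 x) sone /\ sgeq (r2 x) sone.

(** N1 : image under B(nabla,1) of cr_2(B(-,H))(G,G) in B(G*G,H) *)
Definition N1 (G H : group) (x : FP (to_s G) (to_s H)) : Prop :=
  exists z : FP (FP (to_s G) (to_s G)) (to_s H),
    Bker z /\
    sgeq (fpmap (@r1 _ _) (fun h => h) z : FP (to_s G) (to_s H)) sone /\
    sgeq (fpmap (@r2 _ _) (fun h => h) z : FP (to_s G) (to_s H)) sone /\
    sgeq x (fpmap (@nabla _) (fun h => h) z).

(** N2 : image under B(1,nabla) of cr_2(B(G,-))(H,H) in B(G,H*H) *)
Definition N2 (G H : group) (x : FP (to_s G) (to_s H)) : Prop :=
  exists z : FP (to_s G) (FP (to_s H) (to_s H)),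
    Bker z /\
    sgeq (fpmap (fun g => g) (@r1 _ _) z : FP (to_s G) (to_s H)) sone /\
    sgeq (fpmap (fun g => g) (@r2 _ _) z : FP (to_s G) (to_s H)) sone /\
    sgeq x (fpmap (fun g => g) (@nabla _) z).

Inductive sgen (K : sgrp) (S : K -> Prop) : K -> Prop :=
| sgen_in x : S x -> @sgen K S x
| sgen_one : @sgen K S sone
| sgen_mul x y : @sgen K S x -> @sgen K S y -> @sgen K S (smul x y)
| sgen_inv x : @sgen K S x -> @sgen K S (sinv x)
| sgen_eq x y : @sgen K S x -> sgeq x y -> @sgen K S y.

(** equality in T_11 cr_2(Id)(G,H) = B(G,H) / N1 N2 *)
Definition T11rel (G H : group) (x y : FP (to_s G) (to_s H)) : Prop :=
  sgen (fun z => N1 z \/ N2 z) (smul x (sinv y)).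

Arguments T11rel : clear implicits.

Definition gcomm (G : group) (a b : G) : G :=
  gmul G (gmul G (gmul G a b) (ginv G a)) (ginv G b).

Inductive comm_sub (G : group) : G -> Prop :=
| cs_comm a b : @comm_sub G (gcomm a b)
| cs_one : @comm_sub G (gone G)
| cs_mul x y : @comm_sub G x -> @comm_sub G y -> @comm_sub G (gmul G x y)
| cs_inv x : @comm_sub G x -> @comm_sub G (ginv G x).

Definition ab (G : group) : sgrp :=
  @SGrp (gcar G) (fun x y => @comm_sub G (gmul G x (ginv G y))) (gmul G) (gone G) (ginv G).

(** Tensor product of abelian groups: free abelian group on A x B (signed
    lists) modulo bilinearity *)
Inductive tens_rel (A B : sgrp) : list (bool * A * B) -> list (bool * A * B) -> Prop :=
| t_refl w : @tens_rel A B w w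
| t_sym w1 w2 : @tens_rel A B w1 w2 -> @tens_rel A B w2 w1
| t_trans w1 w2 w3 : @tens_rel A B w1 w2 -> @tens_rel A B w2 w3 -> @tens_rel A B w1 w3
| t_cong u v w1 w2 : @tens_rel A B w1 w2 -> @tens_rel A B (u ++ w1 ++ v) (u ++ w2 ++ v)
| t_comm w1 w2 : @tens_rel A B (w1 ++ w2) (w2 ++ w1)
| t_cancel s (a : A) (b : B) : @tens_rel A B [(s, a, b); (negb s, a, b)] []
| t_eq s (a a' : A) (b b' : B) :
    sgeq a a' -> sgeq b b' -> @tens_rel A B [(s, a, b)] [(s, a', b')]
| t_addl s (a a' : A) (b : B) :
    @tens_rel A B [(s, smul a a', b)] [(s, a, b); (s, a', b)]
| t_addr s (a : A) (b b' : B) :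
    @tens_rel A B [(s, a, smul b b')] [(s, a, b); (s, a, b')].

Definition Tens (A B : sgrp) : sgrp :=
  @SGrp (list (bool * A * B)) (@tens_rel A B) (@app _) nil
       (map (fun t => match t with (s, a, b) => (negb s, a, b) end)).

Definition stens (A B : sgrp) (a : A) (b : B) : Tens A B := [(true, a, b)].

Definition tmap (G H G' H' : group) (f : hom G G') (k : hom H H')
  (t : Tens (ab G) (ab H)) : Tens (ab G') (ab H') :=
  map (fun x => match x with (s, a, b) => (s, f a, k b) end) t.

(* Gamma sends a signed formal sum of pairs (a, b) to the corresponding product of
   commutators [i1 a, i2 b]^(+-1) in G * H.  It is onto cr_2: pushing the letters of G
   to the left in a word w costs one commutator per letter, so w is Gamma(t) times
   i1 (r1 w) * i2 (r2 w).  Modulo N1 N2 the commutators commute with each other and are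
   bilinear, because each such relation is the image under a folding map of an element
   of a cross-effect; hence Gamma is well defined on G^ab (x) H^ab.  For injectivity,
   Psi(w) = sum over the G-letters g of w of g (x) r2(suffix after g) is a crossed
   homomorphism which vanishes on N1 and N2 and satisfies Psi (Gamma t) = t. *)

From Stdlib Require Import List Setoid Morphisms Bool PeanoNat.
Import ListNotations.

Class SetoidGroup (K : sgrp) : Prop := {
  sg_refl : forall x : K, sgeq x x;
  sg_sym : forall x y : K, sgeq x y -> sgeq y x;
  sg_trans : forall x y z : K, sgeq x y -> sgeq y z -> sgeq x z;
  sg_mulc : forall x x' y y' : K, sgeq x x' -> sgeq y y' -> sgeq (smul x y) (smul x' y');
  sg_invc : forall x x' : K, sgeq x x' -> sgeq (sinv x) (sinv x');
  sg_mulA : forall x y z : K, sgeq (smul x (smul y z)) (smul (smul x y) z);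
  sg_mul1 : forall x : K, sgeq (smul sone x) x;
  sg_mulV : forall x : K, sgeq (smul (sinv x) x) sone }.

#[global] Instance sgeq_Equivalence K `{SetoidGroup K} : Equivalence (@sgeq K).
Proof. split; red; [apply sg_refl | apply sg_sym | apply sg_trans]. Qed.
#[global] Instance smul_Proper K `{SetoidGroup K} : Proper (sgeq ==> sgeq ==> sgeq) (@smul K).
Proof. repeat intro; apply sg_mulc; assumption. Qed.
#[global] Instance sinv_Proper K `{SetoidGroup K} : Proper (sgeq ==> sgeq) (@sinv K).
Proof. repeat intro; apply sg_invc; assumption. Qed.

Section SetoidGroupTheory.
Context {K : sgrp} `{SetoidGroup K}.

Lemma sg_mulVr (x : K) : sgeq (smul x (sinv x)) sone.
Proof.
  transitivity (smul (smul (sinv (sinv x)) (sinv x)) (smul x (sinv x))).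
  { rewrite sg_mulV. symmetry. apply sg_mul1. }
  rewrite <- sg_mulA, (sg_mulA (sinv x) x), sg_mulV, sg_mul1. apply sg_mulV.
Qed.

Lemma sg_mulr1 (x : K) : sgeq (smul x sone) x.
Proof. rewrite <- (sg_mulV x), sg_mulA, sg_mulVr. apply sg_mul1. Qed.

Lemma sg_invK (x : K) : sgeq (sinv (sinv x)) x.
Proof.
  rewrite <- (sg_mulr1 (sinv (sinv x))), <- (sg_mulV x), sg_mulA, sg_mulV.
  apply sg_mul1.
Qed.

Lemma sg_invM (x y : K) : sgeq (sinv (smul x y)) (smul (sinv y) (sinv x)).
Proof.
  transitivity (smul (sinv (smul x y)) (smul (smul x y) (smul (sinv y) (sinv x)))).
  - rewrite <- (sg_mulA x y), (sg_mulA y), sg_mulVr, sg_mul1, sg_mulVr.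
    symmetry; apply sg_mulr1.
  - rewrite sg_mulA, sg_mulV. apply sg_mul1.
Qed.

Lemma sg_inv1 : sgeq (@sinv K sone) sone.
Proof. rewrite <- (sg_mulr1 (sinv sone)). apply sg_mulV. Qed.

Lemma sg_idem_one (x : K) : sgeq (smul x x) x -> sgeq x sone.
Proof.
  intro h. transitivity (smul (sinv x) (smul x x)).
  - rewrite sg_mulA, sg_mulV, sg_mul1. reflexivity.
  - rewrite h. apply sg_mulV.
Qed.

End SetoidGroupTheory.

(* Equations valid in every group are decided by reifying both sides into
   terms over atoms, flattening them to signed words and reducing freely. *)
Inductive gterm := GAtom (n : nat) | GOne | GMul (a b : gterm) | GInv (a : gterm).

Fixpoint gterm_eval {K : sgrp} (r : nat -> K) (e : gterm) : K :=
  match e with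
  | GAtom n => r n
  | GOne => sone
  | GMul a b => smul (gterm_eval r a) (gterm_eval r b)
  | GInv a => sinv (gterm_eval r a)
  end.

Definition letter_inv (x : bool * nat) := (negb (fst x), snd x).

Fixpoint gterm_word (e : gterm) : list (bool * nat) :=
  match e with
  | GAtom n => [(true, n)]
  | GOne => []
  | GMul a b => gterm_word a ++ gterm_word b
  | GInv a => rev (map letter_inv (gterm_word a))
  end.

Definition letter_eval {K : sgrp} (r : nat -> K) (x : bool * nat) : K :=
  if fst x then r (snd x) else sinv (r (snd x)).

Fixpoint word_eval {K : sgrp} (r : nat -> K) (l : list (bool * nat)) : K :=
  match l with [] => sone | x :: l' => smul (letter_eval r x) (word_eval r l') end.

Definition cancels (x y : bool * nat) := Nat.eqb (snd x) (snd y) && xorb (fst x) (fst y).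

Definition push_letter (x : bool * nat) (acc : list (bool * nat)) :=
  match acc with
  | y :: acc' => if cancels x y then acc' else x :: acc
  | [] => [x]
  end.

Definition free_reduce (l : list (bool * nat)) := fold_right push_letter [] l.

Section WordSolver.
Context {K : sgrp} `{SetoidGroup K} (r : nat -> K).

Lemma word_eval_app l1 l2 :
  sgeq (word_eval r (l1 ++ l2)) (smul (word_eval r l1) (word_eval r l2)).
Proof.
  induction l1 as [|x l1 IH]; simpl.
  - symmetry; apply sg_mul1.
  - rewrite IH. apply sg_mulA.
Qed.

Lemma word_eval_inv l : sgeq (word_eval r (rev (map letter_inv l))) (sinv (word_eval r l)).
Proof.
  induction l as [|[[|] n] l IH]; simpl.
  - symmetry; apply sg_inv1.
  - rewrite word_eval_app, IH, sg_invM. unfold letter_eval; simpl.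
    rewrite sg_mulr1. reflexivity.
  - rewrite word_eval_app, IH, sg_invM. unfold letter_eval; simpl.
    rewrite sg_mulr1, sg_invK. reflexivity.
Qed.

Lemma gterm_eval_word e : sgeq (gterm_eval r e) (word_eval r (gterm_word e)).
Proof.
  induction e; simpl.
  - symmetry; apply sg_mulr1.
  - reflexivity.
  - rewrite word_eval_app, IHe1, IHe2; reflexivity.
  - rewrite word_eval_inv, IHe; reflexivity.
Qed.

Lemma push_letter_eval x acc :
  sgeq (word_eval r (push_letter x acc)) (word_eval r (x :: acc)).
Proof.
  destruct acc as [|y acc]; simpl; [reflexivity|].
  destruct (cancels x y) eqn:E; [|reflexivity].
  apply andb_true_iff in E as [E1 E2]. apply Nat.eqb_eq in E1.
  destruct x as [[|] n], y as [[|] m]; simpl in *; try discriminate; subst;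
    unfold letter_eval; simpl; rewrite sg_mulA.
  - rewrite sg_mulVr, sg_mul1; reflexivity.
  - rewrite sg_mulV, sg_mul1; reflexivity.
Qed.

Lemma free_reduce_eval l : sgeq (word_eval r (free_reduce l)) (word_eval r l).
Proof.
  induction l as [|x l IH]; simpl; [reflexivity|].
  rewrite push_letter_eval. simpl. rewrite IH. reflexivity.
Qed.

Lemma gterm_eval_sound e1 e2 :
  free_reduce (gterm_word e1) = free_reduce (gterm_word e2) ->
  sgeq (gterm_eval r e1) (gterm_eval r e2).
Proof.
  intro E.
  rewrite !gterm_eval_word, <- (free_reduce_eval (gterm_word e1)),
    <- (free_reduce_eval (gterm_word e2)), E.
  reflexivity.
Qed.

End WordSolver.

Ltac lookup_atom x l :=
  lazymatch l with
  | x :: _ => constr:(0)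
  | _ :: ?l' => let n := lookup_atom x l' in constr:(S n)
  end.

(* [nil] and [app] are the unit and product of free products and tensor
   products, so they are reified as such. *)
Ltac reify_gterm env t :=
  lazymatch t with
  | smul ?a ?b =>
      lazymatch reify_gterm env a with pair ?e1 ?env1 =>
      lazymatch reify_gterm env1 b with pair ?e2 ?env2 =>
        constr:(pair (GMul e1 e2) env2) end end
  | app ?a ?b =>
      lazymatch reify_gterm env a with pair ?e1 ?env1 =>
      lazymatch reify_gterm env1 b with pair ?e2 ?env2 =>
        constr:(pair (GMul e1 e2) env2) end end
  | sinv ?a =>
      lazymatch reify_gterm env a with pair ?e1 ?env1 => constr:(pair (GInv e1) env1) end
  | sone => constr:(pair GOne env)
  | @nil _ => constr:(pair GOne env)
  | _ =>
      match constr:(tt) with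
      | _ => let n := lookup_atom t env in constr:(pair (GAtom n) env)
      | _ => let n := eval compute in (length env) in
             let env' := eval cbn beta iota delta [app] in (env ++ [t]) in
             constr:(pair (GAtom n) env')
      end
  end.

Ltac group_eq :=
  unfold scomm;
  lazymatch goal with
  | |- @sgeq ?K ?X ?Y =>
      lazymatch reify_gterm (@nil K) X with pair ?e1 ?env1 =>
      lazymatch reify_gterm env1 Y with pair ?e2 ?env2 =>
        change (@sgeq K (@gterm_eval K (fun n => nth n env2 (@sone K)) e1)
                        (@gterm_eval K (fun n => nth n env2 (@sone K)) e2));
        apply gterm_eval_sound; vm_compute; reflexivity end end
  end.

Section Commuting.
Context {K : sgrp} `{SetoidGroup K}.

Definition commute (x y : K) := sgeq (smul x y) (smul y x).

Lemma commute_sym x y : commute x y -> commute y x.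
Proof. unfold commute; intro h; symmetry; exact h. Qed.

Lemma commute_invl x y : commute x y -> commute (sinv x) y.
Proof.
  unfold commute; intro h.
  transitivity (smul (smul (sinv x) (smul y x)) (sinv x)); [group_eq|].
  rewrite <- h. group_eq.
Qed.

Lemma commute_mull x y z : commute x z -> commute y z -> commute (smul x y) z.
Proof.
  unfold commute; intros hx hy.
  transitivity (smul x (smul y z)); [group_eq|]. rewrite hy.
  transitivity (smul (smul x z) y); [group_eq|]. rewrite hx. group_eq.
Qed.

Lemma commute_onel y : commute sone y.
Proof. unfold commute. group_eq. Qed.

Lemma sg_eq_inv_of_mul (x y : K) : sgeq (smul x y) sone -> sgeq y (sinv x).
Proof.
  intro h. transitivity (smul (sinv x) (smul x y)); [group_eq|]. rewrite h. group_eq.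
Qed.

End Commuting.

Record is_shom {K K' : sgrp} (f : K -> K') : Prop := {
  shom_compat : forall x y, sgeq x y -> sgeq (f x) (f y);
  shom_mul : forall x y, sgeq (f (smul x y)) (smul (f x) (f y));
  shom_one : sgeq (f sone) sone }.
Arguments shom_compat {K K' f} _ _ _ _.
Arguments shom_mul {K K' f} _ _ _.
Arguments shom_one {K K' f} _.

Section Homomorphisms.
Context {K K' : sgrp} `{SetoidGroup K} `{SetoidGroup K'}.

Lemma shom_of_mul (f : K -> K') :
  (forall x y, sgeq x y -> sgeq (f x) (f y)) ->
  (forall x y, sgeq (f (smul x y)) (smul (f x) (f y))) -> is_shom f.
Proof.
  intros hc hm. split; [exact hc | exact hm|].
  apply sg_idem_one. rewrite <- hm. apply hc, sg_mul1.
Qed.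

Lemma shom_inv {f : K -> K'} (hf : is_shom f) x : sgeq (f (sinv x)) (sinv (f x)).
Proof.
  transitivity (smul (f (sinv x)) (smul (f x) (sinv (f x)))).
  { rewrite sg_mulVr, sg_mulr1. reflexivity. }
  rewrite sg_mulA, <- (shom_mul hf), (shom_compat hf _ _ (sg_mulV x)), (shom_one hf).
  apply sg_mul1.
Qed.

Lemma shom_ker_conj {f : K -> K'} (hf : is_shom f) (x y : K) :
  sgeq (f x) sone -> sgeq (f (smul (smul y x) (sinv y))) sone.
Proof. intro h. rewrite !(shom_mul hf), (shom_inv hf), h. group_eq. Qed.

End Homomorphisms.

Lemma shom_id {K : sgrp} `{SetoidGroup K} : is_shom (fun x : K => x).
Proof. split; intros; auto; reflexivity. Qed.

Lemma shom_trivial {K K' : sgrp} `{SetoidGroup K'} : is_shom (fun _ : K => @sone K').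
Proof. split; intros; try reflexivity. symmetry; apply sg_mul1. Qed.

Lemma shom_comp {K1 K2 K3 : sgrp} `{SetoidGroup K3} (f : K1 -> K2) (g : K2 -> K3) :
  is_shom f -> is_shom g -> is_shom (fun x => g (f x)).
Proof.
  intros hf hg. split; intros.
  - apply (shom_compat hg), (shom_compat hf); assumption.
  - rewrite (shom_compat hg _ _ (shom_mul hf x y)). apply (shom_mul hg).
  - rewrite (shom_compat hg _ _ (shom_one hf)). apply (shom_one hg).
Qed.

Ltac push_shom hf := repeat (rewrite (shom_mul hf) || rewrite (shom_inv hf)).

#[global] Instance to_s_SetoidGroup (G : group) : SetoidGroup (to_s G).
Proof.
  split; simpl; intros; subst; auto.
  - apply gmulA.
  - apply gmul1.
  - apply gmulV.
Qed.

Lemma to_s_eq {G : group} {x y : to_s G} : sgeq x y -> x = y.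
Proof. exact (fun e => e). Qed.

Lemma hom_shom (G H : group) (f : hom G H) : @is_shom (to_s G) (to_s H) f.
Proof.
  apply shom_of_mul; [intros x y e; rewrite (to_s_eq e); reflexivity | apply hmulP].
Qed.

Section FreeProduct.
Context {A B : sgrp}.

Lemma fp_rel_appl (u w1 w2 : list (A + B)) : fp_rel w1 w2 -> fp_rel (u ++ w1) (u ++ w2).
Proof. intro h. pose proof (fp_cong u [] h) as h'. rewrite !app_nil_r in h'. exact h'. Qed.

Lemma fp_rel_appr (v w1 w2 : list (A + B)) : fp_rel w1 w2 -> fp_rel (w1 ++ v) (w2 ++ v).
Proof. exact (fp_cong [] v (w1 := w1) (w2 := w2)). Qed.

Context `{SetoidGroup A} `{SetoidGroup B}.

#[global] Instance FP_SetoidGroup : SetoidGroup (FP A B).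
Proof.
  split; simpl.
  - apply fp_refl.
  - apply fp_sym.
  - apply fp_trans.
  - intros. eapply fp_trans; [apply fp_rel_appr | apply fp_rel_appl]; eassumption.
  - intros x x' h. induction h; simpl.
    + apply fp_refl.
    + apply fp_sym; assumption.
    + eapply fp_trans; eassumption.
    + rewrite !map_app, !rev_app_distr, <- !app_assoc.
      apply fp_rel_appl, fp_rel_appr; assumption.
    + apply fp_eql, sg_invc; assumption.
    + apply fp_eqr, sg_invc; assumption.
    + eapply fp_trans; [apply fp_eql, sg_inv1 | apply fp_onel].
    + eapply fp_trans; [apply fp_eqr, sg_inv1 | apply fp_oner].
    + eapply fp_trans; [apply fp_mull | apply fp_eql; rewrite sg_invM; reflexivity].
    + eapply fp_trans; [apply fp_mulr | apply fp_eqr; rewrite sg_invM; reflexivity].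
  - intros. rewrite app_assoc. apply fp_refl.
  - intros; apply fp_refl.
  - intro x. induction x as [|l x IH]; simpl; [apply fp_refl|].
    rewrite <- app_assoc.
    change (fp_rel (rev (map (@linv A B) x) ++ ([linv l; l] ++ x)) []).
    eapply fp_trans; [|exact IH].
    apply fp_rel_appl. change x with ([] ++ x) at 2. apply fp_rel_appr.
    destruct l as [a|b]; simpl.
    + eapply fp_trans; [apply fp_mull|].
      eapply fp_trans; [apply fp_eql, sg_mulV | apply fp_onel].
    + eapply fp_trans; [apply fp_mulr|].
      eapply fp_trans; [apply fp_eqr, sg_mulV | apply fp_oner].
Qed.

Lemma i1_shom : @is_shom A (FP A B) (@i1 A B).
Proof.
  split; intros; simpl.
  - apply fp_eql; assumption.
  - apply fp_sym, fp_mull.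
  - apply fp_onel.
Qed.

Lemma i2_shom : @is_shom B (FP A B) (@i2 A B).
Proof.
  split; intros; simpl.
  - apply fp_eqr; assumption.
  - apply fp_sym, fp_mulr.
  - apply fp_oner.
Qed.

Context {K : sgrp} `{SetoidGroup K}.

Lemma eval2_app (f : A -> K) (g : B -> K) (u v : FP A B) :
  sgeq (eval2 f g (u ++ v)) (smul (eval2 f g u) (eval2 f g v)).
Proof.
  induction u as [|l u IH]; simpl.
  - symmetry; apply sg_mul1.
  - rewrite IH. apply sg_mulA.
Qed.

Lemma eval2_shom (f : A -> K) (g : B -> K) : is_shom f -> is_shom g -> is_shom (eval2 f g).
Proof.
  intros hf hg. split; [|exact (eval2_app f g)|reflexivity].
  intros x y h. induction h as [| | |u v w1 w2 _ IH|a a' e|b b' e| | | |]; simpl.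
  - reflexivity.
  - symmetry; assumption.
  - etransitivity; eassumption.
  - rewrite !eval2_app, IH. reflexivity.
  - rewrite (shom_compat hf _ _ e). reflexivity.
  - rewrite (shom_compat hg _ _ e). reflexivity.
  - rewrite (shom_one hf). apply sg_mul1.
  - rewrite (shom_one hg). apply sg_mul1.
  - rewrite (shom_mul hf). group_eq.
  - rewrite (shom_mul hg). group_eq.
Qed.

Lemma eval2_ext (f f' : A -> K) (g g' : B -> K) :
  (forall a, sgeq (f a) (f' a)) -> (forall b, sgeq (g b) (g' b)) ->
  forall w, sgeq (eval2 f g w) (eval2 f' g' w).
Proof.
  intros hf hg w. induction w as [|[a|b] w IH]; simpl; [reflexivity| |].
  - rewrite hf, IH; reflexivity.
  - rewrite hg, IH; reflexivity.
Qed.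

Lemma eval2_i1 (f : A -> K) (g : B -> K) a : sgeq (eval2 f g (i1 B a)) (f a).
Proof. apply sg_mulr1. Qed.

Lemma eval2_i2 (f : A -> K) (g : B -> K) b : sgeq (eval2 f g (i2 A b)) (g b).
Proof. apply sg_mulr1. Qed.

End FreeProduct.

Lemma shom_eval2 {A B K K' : sgrp} `{SetoidGroup K'}
  (phi : K -> K') (f : A -> K) (g : B -> K) : is_shom phi ->
  forall w, sgeq (phi (eval2 f g w)) (eval2 (fun a => phi (f a)) (fun b => phi (g b)) w).
Proof.
  intros hphi w. induction w as [|[a|b] w IH]; simpl.
  - exact (shom_one hphi).
  - rewrite (shom_mul hphi), IH; reflexivity.
  - rewrite (shom_mul hphi), IH; reflexivity.
Qed.

Lemma eval2_fpmap {A B A' B' K : sgrp} (f : A' -> K) (g : B' -> K)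
  (f' : A -> A') (g' : B -> B') w :
  eval2 f g (fpmap f' g' w) = eval2 (fun a => f (f' a)) (fun b => g (g' b)) w.
Proof. induction w as [|[a|b] w IH]; simpl; rewrite ?IH; reflexivity. Qed.

Lemma fpmap_as_eval2 {A B A' B' : sgrp} (f : A -> A') (g : B -> B') w :
  fpmap f g w = eval2 (K := FP A' B') (fun a => i1 B' (f a)) (fun b => i2 A' (g b)) w.
Proof. induction w as [|[a|b] w IH]; simpl; rewrite ?IH; reflexivity. Qed.

Lemma fpmap_fpmap {A B A' B' A'' B'' : sgrp} (f : A -> A') (g : B -> B')
  (f' : A' -> A'') (g' : B' -> B'') w :
  fpmap f' g' (fpmap f g w) = fpmap (fun a => f' (f a)) (fun b => g' (g b)) w.
Proof. induction w as [|[a|b] w IH]; simpl; rewrite ?IH; reflexivity. Qed.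

Lemma fpmap_id {A B : sgrp} (w : FP A B) : fpmap (fun a => a) (fun b => b) w = w.
Proof. induction w as [|[a|b] w IH]; simpl; rewrite ?IH; reflexivity. Qed.

Lemma fpmap_i1 {A B A' B' : sgrp} (f : A -> A') (g : B -> B') (a : A) :
  fpmap f g (i1 B a) = i1 B' (f a).
Proof. reflexivity. Qed.

Lemma fpmap_i2 {A B A' B' : sgrp} (f : A -> A') (g : B -> B') (b : B) :
  fpmap f g (i2 A b) = i2 A' (g b).
Proof. reflexivity. Qed.

Section FreeProductMaps.
Context {A B : sgrp} `{SetoidGroup A} `{SetoidGroup B}.

Lemma r1_shom : is_shom (@r1 A B).
Proof. apply eval2_shom; [apply shom_id | apply shom_trivial]. Qed.
Lemma r2_shom : is_shom (@r2 A B).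
Proof. apply eval2_shom; [apply shom_trivial | apply shom_id]. Qed.

Lemma r1_i1 (a : A) : sgeq (r1 (i1 B a)) a. Proof. apply eval2_i1. Qed.
Lemma r1_i2 (b : B) : sgeq (r1 (i2 A b)) sone. Proof. exact (eval2_i2 _ _ b). Qed.
Lemma r2_i1 (a : A) : sgeq (r2 (i1 B a)) sone. Proof. exact (eval2_i1 _ _ a). Qed.
Lemma r2_i2 (b : B) : sgeq (r2 (i2 A b)) b. Proof. apply eval2_i2. Qed.

Context {A' B' : sgrp} `{SetoidGroup A'} `{SetoidGroup B'}.

Lemma fpmap_shom (f : A -> A') (g : B -> B') :
  is_shom f -> is_shom g -> is_shom (fpmap f g).
Proof.
  intros hf hg.
  assert (E : is_shom (eval2 (K := FP A' B') (fun a => i1 B' (f a)) (fun b => i2 A' (g b)))).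
  { apply eval2_shom; apply shom_comp; auto; [apply i1_shom | apply i2_shom]. }
  split; intros; rewrite ?fpmap_as_eval2; apply E; assumption.
Qed.

Lemma fpmap_ext (f f' : A -> A') (g g' : B -> B') :
  (forall a, sgeq (f a) (f' a)) -> (forall b, sgeq (g b) (g' b)) ->
  forall w, sgeq (fpmap f g w) (fpmap f' g' w).
Proof.
  intros hf hg w. rewrite !fpmap_as_eval2.
  apply eval2_ext; intros; [apply (shom_compat i1_shom), hf | apply (shom_compat i2_shom), hg].
Qed.

End FreeProductMaps.

Section Folding.
Context {A : sgrp} `{SetoidGroup A}.

Lemma nabla_shom : is_shom (@nabla A).
Proof. apply eval2_shom; apply shom_id. Qed.

Lemma nabla_i1 (a : A) : sgeq (nabla (i1 A a)) a. Proof. apply eval2_i1. Qed.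
Lemma nabla_i2 (a : A) : sgeq (nabla (i2 A a)) a. Proof. apply eval2_i2. Qed.

End Folding.

Section TensorProduct.
Context {A B : sgrp}.

Lemma tens_rel_appl (u w1 w2 : list (bool * A * B)) :
  tens_rel w1 w2 -> tens_rel (u ++ w1) (u ++ w2).
Proof. intro h. pose proof (t_cong u [] h) as h'. rewrite !app_nil_r in h'. exact h'. Qed.

Lemma tens_rel_appr (v w1 w2 : list (bool * A * B)) :
  tens_rel w1 w2 -> tens_rel (w1 ++ v) (w2 ++ v).
Proof. exact (t_cong [] v (w1 := w1) (w2 := w2)). Qed.

#[global] Instance Tens_SetoidGroup : SetoidGroup (Tens A B).
Proof.
  split; simpl.
  - apply t_refl.
  - apply t_sym.
  - apply t_trans.
  - intros. eapply t_trans; [apply tens_rel_appr | apply tens_rel_appl]; eassumption.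
  - intros x x' h. induction h; simpl; rewrite ?map_app.
    + apply t_refl.
    + apply t_sym; assumption.
    + eapply t_trans; eassumption.
    + apply tens_rel_appl, tens_rel_appr; assumption.
    + apply t_comm.
    + apply t_cancel.
    + apply t_eq; assumption.
    + apply t_addl.
    + apply t_addr.
  - intros. rewrite app_assoc. apply t_refl.
  - intros; apply t_refl.
  - intro x. induction x as [|[[s a] b] x IH]; simpl; [apply t_refl|].
    set (M := map _ x) in *.
    apply t_trans with ((negb s, a, b) :: ((M ++ [(s, a, b)]) ++ x)).
    { rewrite <- app_assoc. apply t_refl. }
    apply t_trans with ((negb s, a, b) :: (([(s, a, b)] ++ M) ++ x)).
    { apply (tens_rel_appl [(negb s, a, b)]), tens_rel_appr, t_comm. }
    change (tens_rel ([(negb s, a, b); (s, a, b)] ++ (M ++ x)) ([] ++ [])).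
    eapply t_trans; [apply tens_rel_appl; exact IH | apply tens_rel_appr].
    pose proof (t_cancel (negb s) a b) as h. rewrite negb_involutive in h. exact h.
Qed.

Lemma Tens_mulC (x y : Tens A B) : sgeq (smul x y) (smul y x).
Proof. apply t_comm. Qed.

End TensorProduct.

Section CrossEffect.
Context {A B : sgrp} `{SetoidGroup A} `{SetoidGroup B}.

Lemma Bker_one : Bker (@sone (FP A B)).
Proof. split; reflexivity. Qed.

Lemma Bker_mul (x y : FP A B) : Bker x -> Bker y -> Bker (smul x y).
Proof.
  intros [hx1 hx2] [hy1 hy2]. split.
  - rewrite (shom_mul r1_shom), hx1, hy1. apply sg_mul1.
  - rewrite (shom_mul r2_shom), hx2, hy2. apply sg_mul1.
Qed.

Lemma Bker_inv (x : FP A B) : Bker x -> Bker (sinv x).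
Proof.
  intros [hx1 hx2]. split.
  - rewrite (shom_inv r1_shom), hx1. apply sg_inv1.
  - rewrite (shom_inv r2_shom), hx2. apply sg_inv1.
Qed.

Lemma Bker_scomm (a : A) (b : B) : Bker (scomm (i1 B a) (i2 A b)).
Proof.
  split; unfold scomm.
  - rewrite !(shom_mul r1_shom), !(shom_inv r1_shom), r1_i1, r1_i2. group_eq.
  - rewrite !(shom_mul r2_shom), !(shom_inv r2_shom), r2_i1, r2_i2. group_eq.
Qed.

End CrossEffect.

Section Gamma.
Context (G H : group).
Notation F := (FP (to_s G) (to_s H)).
Notation j1 := (@i1 (to_s G) (to_s H)).
Notation j2 := (@i2 (to_s G) (to_s H)).

Definition bcomm (a : G) (b : H) : F := scomm (j1 a) (j2 b).

Definition comm_gen (s : bool) (a : G) (b : H) : F :=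
  if s then bcomm a b else sinv (bcomm a b).

(* A signed list of pairs is read as a formal sum in G^ab (x) H^ab. *)
Fixpoint Gamma (t : list (bool * gcar G * gcar H)) : F :=
  match t with
  | [] => sone
  | (s, a, b) :: t' => smul (comm_gen s a b) (Gamma t')
  end.

Lemma Gamma_app t t' : Gamma (t ++ t') = smul (Gamma t) (Gamma t').
Proof.
  induction t as [|[[s a] b] t IH]; simpl; rewrite ?IH; [reflexivity|].
  apply app_assoc.
Qed.

Lemma Bker_comm_gen s a b : Bker (comm_gen s a b).
Proof. destruct s; [|apply Bker_inv]; apply Bker_scomm. Qed.

Lemma Bker_Gamma t : Bker (Gamma t).
Proof.
  induction t as [|[[s a] b] t IH]; [apply Bker_one|].
  apply Bker_mul; [apply Bker_comm_gen | exact IH].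
Qed.

(* Moving a letter of G leftwards past the H-part costs one commutator. *)
Lemma FP_decomp (w : F) :
  exists t, sgeq w (smul (Gamma t) (smul (j1 (r1 w)) (j2 (r2 w)))).
Proof.
  induction w as [|l w IH] using rev_ind.
  - exists []. change (@sgeq F sone (smul sone (smul (j1 sone) (j2 sone)))).
    rewrite (shom_one i1_shom), (shom_one i2_shom). group_eq.
  - destruct IH as [t IH].
    assert (E1 : r1 (w ++ [l]) = smul (r1 w) (r1 [l])) by exact (eval2_app (K := to_s G) _ _ w [l]).
    assert (E2 : r2 (w ++ [l]) = smul (r2 w) (r2 [l])) by exact (eval2_app (K := to_s H) _ _ w [l]).
    rewrite E1, E2. change (w ++ [l]) with (@smul F w [l]).
    set (g := r1 w) in *. set (h := r2 w) in *. clearbody g h. clear E1 E2.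
    destruct l as [g0|h0].
    + exists (t ++ [(true, g, h); (false, smul g g0, h)]).
      change [inl g0] with (j1 g0).
      rewrite IH, r1_i1, r2_i1, (sg_mulr1 h), Gamma_app. cbn [Gamma].
      unfold comm_gen, bcomm, scomm; cbv beta iota.
      rewrite !(shom_mul i1_shom). group_eq.
    + exists t.
      change [inr h0] with (j2 h0).
      rewrite IH, r1_i2, r2_i2, (sg_mulr1 g), (shom_mul i2_shom). group_eq.
Qed.

End Gamma.

(** * The quotient T11 cr_2(Id)(G, H) *)

Section T11Quotient.
Context (G H : group).
Notation F := (FP (to_s G) (to_s H)).

(* Conjugating by y is the image under the folding map of conjugating by
   the copy of y in the first (resp. second) factor of G * G (resp. H * H). *)
Lemma N1_conj (x y : F) : N1 x -> N1 (smul (smul y x) (sinv y)).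
Proof.
  intros [z [[hz1 hz2] [hz3 [hz4 hz5]]]].
  set (L := fpmap (fun g : to_s G => i1 (to_s G) g) (fun h : to_s H => h) y).
  exists (smul (smul L z) (sinv L)). split; [split|split; [|split]].
  - apply (shom_ker_conj r1_shom); assumption.
  - apply (shom_ker_conj r2_shom); assumption.
  - apply (shom_ker_conj (fpmap_shom _ _ r1_shom shom_id)); assumption.
  - apply (shom_ker_conj (fpmap_shom _ _ r2_shom shom_id)); assumption.
  - pose proof (fpmap_shom _ _ (nabla_shom (A := to_s G)) (shom_id (K := to_s H))) as hN.
    assert (E : sgeq (fpmap (@nabla (to_s G)) (fun h : to_s H => h) L) y).
    { unfold L. rewrite fpmap_fpmap. rewrite <- (fpmap_id y) at 2.
      apply fpmap_ext; intros; [apply nabla_i1 | reflexivity]. }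
    rewrite !(shom_mul hN), (shom_inv hN), <- hz5, E. reflexivity.
Qed.

Lemma N2_conj (x y : F) : N2 x -> N2 (smul (smul y x) (sinv y)).
Proof.
  intros [z [[hz1 hz2] [hz3 [hz4 hz5]]]].
  set (L := fpmap (fun g : to_s G => g) (fun h : to_s H => i1 (to_s H) h) y).
  exists (smul (smul L z) (sinv L)). split; [split|split; [|split]].
  - apply (shom_ker_conj r1_shom); assumption.
  - apply (shom_ker_conj r2_shom); assumption.
  - apply (shom_ker_conj (fpmap_shom _ _ shom_id r1_shom)); assumption.
  - apply (shom_ker_conj (fpmap_shom _ _ shom_id r2_shom)); assumption.
  - pose proof (fpmap_shom _ _ (shom_id (K := to_s G)) (nabla_shom (A := to_s H))) as hN.
    assert (E : sgeq (fpmap (fun g : to_s G => g) (@nabla (to_s H)) L) y).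
    { unfold L. rewrite fpmap_fpmap. rewrite <- (fpmap_id y) at 2.
      apply fpmap_ext; intros; [reflexivity | apply nabla_i1]. }
    rewrite !(shom_mul hN), (shom_inv hN), <- hz5, E. reflexivity.
Qed.

Definition N12 (x : F) : Prop := N1 x \/ N2 x.

Lemma sgen_N12_conj (x y : F) : sgen N12 x -> sgen N12 (smul (smul y x) (sinv y)).
Proof.
  intro h. induction h as [x [h|h]| |x x' _ IH _ IH'|x _ IH|x x' _ IH e].
  - apply sgen_in. left; apply N1_conj; exact h.
  - apply sgen_in. right; apply N2_conj; exact h.
  - eapply sgen_eq; [apply sgen_one | group_eq].
  - eapply sgen_eq; [apply sgen_mul; [exact IH | exact IH'] | group_eq].
  - eapply sgen_eq; [apply sgen_inv; exact IH | group_eq].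
  - eapply sgen_eq; [exact IH | rewrite e; reflexivity].
Qed.

Definition T11 : sgrp := @SGrp F (T11rel G H) (@smul F) (@sone F) (@sinv F).

Lemma T11rel_of_sgeq (x y : F) : sgeq x y -> T11rel G H x y.
Proof.
  intro e. eapply sgen_eq; [apply sgen_one|]. rewrite e. symmetry. apply sg_mulVr.
Qed.

#[global] Instance T11_SetoidGroup : SetoidGroup T11.
Proof.
  split; unfold T11; cbn [sgeq smul sone sinv scar]; unfold T11rel; fold N12.
  - intros; apply T11rel_of_sgeq; reflexivity.
  - intros x y h. eapply sgen_eq; [apply sgen_inv; exact h | group_eq].
  - intros x y z h1 h2. eapply sgen_eq; [apply sgen_mul; [exact h1 | exact h2] | group_eq].
  - intros x x' y y' h1 h2.
    eapply sgen_eq; [apply sgen_mul; [apply (sgen_N12_conj _ x) in h2; exact h2 | exact h1]|].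
    group_eq.
  - intros x x' h.
    eapply sgen_eq; [apply (sgen_N12_conj (sinv (smul x (sinv x'))) (sinv x)), sgen_inv; exact h|].
    group_eq.
  - intros; apply T11rel_of_sgeq, sg_mulA.
  - intros; apply T11rel_of_sgeq, sg_mul1.
  - intros; apply T11rel_of_sgeq, sg_mulV.
Qed.

End T11Quotient.

(** * Bilinearity of the commutators modulo N1 N2 *)

Section Bilinearity.
Context (G H : group).
Notation GG := (FP (to_s G) (to_s G)).
Notation HH := (FP (to_s H) (to_s H)).

Ltac simpl_N1_witness :=
  unfold bcomm, scomm;
  push_shom (r1_shom (A := GG) (B := to_s H));
  push_shom (r2_shom (A := GG) (B := to_s H));
  push_shom (fpmap_shom _ _ (r1_shom (A := to_s G) (B := to_s G)) (shom_id (K := to_s H)));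
  push_shom (fpmap_shom _ _ (r2_shom (A := to_s G) (B := to_s G)) (shom_id (K := to_s H)));
  push_shom (fpmap_shom _ _ (nabla_shom (A := to_s G)) (shom_id (K := to_s H)));
  rewrite ?fpmap_i1, ?fpmap_i2, ?r1_i1, ?r1_i2, ?r2_i1, ?r2_i2, ?nabla_i1, ?nabla_i2,
    ?(shom_one (i1_shom (A := to_s G) (B := to_s H))),
    ?(shom_mul (i1_shom (A := to_s G) (B := to_s H))).

Ltac simpl_N2_witness :=
  unfold bcomm, scomm;
  push_shom (r1_shom (A := to_s G) (B := HH));
  push_shom (r2_shom (A := to_s G) (B := HH));
  push_shom (fpmap_shom _ _ (shom_id (K := to_s G)) (r1_shom (A := to_s H) (B := to_s H)));
  push_shom (fpmap_shom _ _ (shom_id (K := to_s G)) (r2_shom (A := to_s H) (B := to_s H)));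
  push_shom (fpmap_shom _ _ (shom_id (K := to_s G)) (nabla_shom (A := to_s H)));
  rewrite ?fpmap_i1, ?fpmap_i2, ?r1_i1, ?r1_i2, ?r2_i1, ?r2_i2, ?nabla_i1, ?nabla_i2,
    ?(shom_one (i2_shom (A := to_s G) (B := to_s H))),
    ?(shom_mul (i2_shom (A := to_s G) (B := to_s H))).

(* Each relation is the fold of a cross-effect element obtained by putting the
   two arguments that vary in different factors of G * G (resp. H * H). *)
Lemma N1_bcomm_commute (a a' : to_s G) (b b' : to_s H) :
  N1 (scomm (bcomm G H a b) (bcomm G H a' b')).
Proof.
  exists (scomm (scomm (i1 (to_s H) (i1 (to_s G) a)) (i2 GG b))
           (scomm (i1 (to_s H) (i2 (to_s G) a')) (i2 GG b'))).
  split; [split|split; [|split]]; simpl_N1_witness; group_eq.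
Qed.

Lemma N1_bcomm_mull (a a' : to_s G) (b : to_s H) :
  N1 (smul (smul (bcomm G H (smul a a') b) (sinv (bcomm G H a' b))) (sinv (bcomm G H a b))).
Proof.
  exists (smul (smul (scomm (smul (i1 (to_s H) (i1 (to_s G) a))
                                  (i1 (to_s H) (i2 (to_s G) a'))) (i2 GG b))
                     (sinv (scomm (i1 (to_s H) (i2 (to_s G) a')) (i2 GG b))))
               (sinv (scomm (i1 (to_s H) (i1 (to_s G) a)) (i2 GG b)))).
  split; [split|split; [|split]]; simpl_N1_witness; group_eq.
Qed.

Lemma N2_bcomm_mulr (a : to_s G) (b b' : to_s H) :
  N2 (smul (smul (bcomm G H a (smul b b')) (sinv (bcomm G H a b'))) (sinv (bcomm G H a b))).
Proof.
  exists (smul (smul (scomm (i1 HH a) (smul (i2 (to_s G) (i1 (to_s H) b))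
                                              (i2 (to_s G) (i2 (to_s H) b'))))
                     (sinv (scomm (i1 HH a) (i2 (to_s G) (i2 (to_s H) b')))))
               (sinv (scomm (i1 HH a) (i2 (to_s G) (i1 (to_s H) b))))).
  split; [split|split; [|split]]; simpl_N2_witness; group_eq.
Qed.

End Bilinearity.

Section GammaCompat.
Context (G H : group).
Notation F := (FP (to_s G) (to_s H)).
Notation Q := (T11 G H).
Notation QE x y := (@sgeq Q x y).
Notation qmul := (@smul Q).
Notation qinv := (@sinv Q).
Notation bcomm := (bcomm G H).
Notation comm_gen := (comm_gen G H).
Notation Gamma := (Gamma G H).

(* The carrier of [Q] is that of [F]; this moves all operations to [Q]. *)
Ltac in_Q :=
  try change (@smul F) with qmul; try change (@sinv F) with qinv;
  try change (@sone F) with (@sone Q); try change (@scomm F) with (@scomm Q).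

Lemma T11_N12_trivial (x : F) : N1 x \/ N2 x -> QE x sone.
Proof. intro h. eapply sgen_eq; [apply sgen_in; exact h | group_eq]. Qed.

Lemma bcomm_commute (a a' : to_s G) (b b' : to_s H) :
  QE (qmul (bcomm a b) (bcomm a' b')) (qmul (bcomm a' b') (bcomm a b)).
Proof.
  pose proof (T11_N12_trivial _ (or_introl (N1_bcomm_commute G H a a' b b'))) as h.
  in_Q.
  transitivity (qmul (scomm (bcomm a b) (bcomm a' b')) (qmul (bcomm a' b') (bcomm a b)));
    [group_eq|].
  rewrite h. group_eq.
Qed.

Lemma bcomm_mull (a a' : to_s G) (b : to_s H) :
  QE (bcomm (smul a a') b) (qmul (bcomm a b) (bcomm a' b)).
Proof.
  pose proof (T11_N12_trivial _ (or_introl (N1_bcomm_mull G H a a' b))) as h.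
  in_Q.
  transitivity (qmul (qmul (qmul (bcomm (smul a a') b) (qinv (bcomm a' b)))
                           (qinv (bcomm a b))) (qmul (bcomm a b) (bcomm a' b)));
    [group_eq|].
  rewrite h. group_eq.
Qed.

Lemma bcomm_mulr (a : to_s G) (b b' : to_s H) :
  QE (bcomm a (smul b b')) (qmul (bcomm a b) (bcomm a b')).
Proof.
  pose proof (T11_N12_trivial _ (or_intror (N2_bcomm_mulr G H a b b'))) as h.
  in_Q.
  transitivity (qmul (qmul (qmul (bcomm a (smul b b')) (qinv (bcomm a b')))
                           (qinv (bcomm a b))) (qmul (bcomm a b) (bcomm a b')));
    [group_eq|].
  rewrite h. group_eq.
Qed.

Lemma bcomm_invl (a : to_s G) (b : to_s H) : QE (bcomm (sinv a) b) (qinv (bcomm a b)).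
Proof.
  apply sg_eq_inv_of_mul. rewrite <- bcomm_mull, (sg_mulVr (K := to_s G) a).
  apply T11rel_of_sgeq. unfold bcomm, scomm. rewrite (shom_one i1_shom). group_eq.
Qed.

Lemma bcomm_invr (a : to_s G) (b : to_s H) : QE (bcomm a (sinv b)) (qinv (bcomm a b)).
Proof.
  apply sg_eq_inv_of_mul. rewrite <- bcomm_mulr, (sg_mulVr (K := to_s H) b).
  apply T11rel_of_sgeq. unfold bcomm, scomm. rewrite (shom_one i2_shom). group_eq.
Qed.

Lemma bcomm_comm_subl (c : G) (b : to_s H) : comm_sub c -> QE (bcomm c b) sone.
Proof.
  intro hc. induction hc as [p q| |x y _ IHx _ IHy|x _ IH].
  - change (gcomm p q) with (@scomm (to_s G) p q). unfold scomm.
    rewrite !bcomm_mull, !bcomm_invl, (bcomm_commute p q b b). group_eq.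
  - apply T11rel_of_sgeq. unfold bcomm, scomm. rewrite (shom_one i1_shom). group_eq.
  - change (gmul G x y) with (@smul (to_s G) x y). rewrite bcomm_mull, IHx, IHy. group_eq.
  - change (ginv G x) with (@sinv (to_s G) x). rewrite bcomm_invl, IH. group_eq.
Qed.

Lemma bcomm_comm_subr (a : to_s G) (d : H) : comm_sub d -> QE (bcomm a d) sone.
Proof.
  intro hd. induction hd as [p q| |x y _ IHx _ IHy|x _ IH].
  - change (gcomm p q) with (@scomm (to_s H) p q). unfold scomm.
    rewrite !bcomm_mulr, !bcomm_invr, (bcomm_commute a a p q). group_eq.
  - apply T11rel_of_sgeq. unfold bcomm, scomm. rewrite (shom_one i2_shom). group_eq.
  - change (gmul H x y) with (@smul (to_s H) x y). rewrite bcomm_mulr, IHx, IHy. group_eq.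
  - change (ginv H x) with (@sinv (to_s H) x). rewrite bcomm_invr, IH. group_eq.
Qed.

Lemma bcomm_ab_compat (a a' : ab G) (b b' : ab H) :
  sgeq a a' -> sgeq b b' -> QE (bcomm a b) (bcomm a' b').
Proof.
  intros ha hb.
  assert (Ea : a = @smul (to_s G) (smul a (sinv a')) a') by
    (symmetry; change (@sgeq (to_s G) (smul (smul a (sinv a')) a') a); group_eq).
  assert (Eb : b = @smul (to_s H) (smul b (sinv b')) b') by
    (symmetry; change (@sgeq (to_s H) (smul (smul b (sinv b')) b') b); group_eq).
  rewrite Ea at 1. rewrite Eb at 1.
  rewrite bcomm_mull, !bcomm_mulr, !bcomm_comm_subl, bcomm_comm_subr by assumption.
  group_eq.
Qed.

Lemma comm_gen_commute s a b s' a' b' :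
  commute (K := Q) (comm_gen s a b) (comm_gen s' a' b').
Proof.
  pose proof (bcomm_commute a a' b b') as h.
  destruct s, s'; unfold comm_gen; in_Q.
  - exact h.
  - apply commute_sym, commute_invl, commute_sym, h.
  - apply commute_invl, h.
  - apply commute_invl, commute_sym, commute_invl, commute_sym, h.
Qed.

Lemma Gamma_commute t t' : commute (K := Q) (Gamma t) (Gamma t').
Proof.
  assert (Hgen : forall s a b, commute (K := Q) (comm_gen s a b) (Gamma t')).
  { intros s a b. apply commute_sym.
    induction t' as [|[[s' a'] b'] t' IH]; cbn [Gamma]; in_Q; [apply commute_onel|].
    apply commute_mull; [apply comm_gen_commute | exact IH]. }
  induction t as [|[[s a] b] t IH]; cbn [Gamma]; in_Q; [apply commute_onel|].
  apply commute_mull; [apply Hgen | exact IH].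
Qed.

Lemma Gamma_compat (t t' : Tens (ab G) (ab H)) : sgeq t t' -> QE (Gamma t) (Gamma t').
Proof.
  intro h.
  induction h as [| | |u v w1 w2 _ IH|w1 w2|s a b|s a a' b b' ha hb|s a a' b|s a b b'];
    cbn [Gamma]; in_Q.
  - reflexivity.
  - symmetry; assumption.
  - etransitivity; eassumption.
  - rewrite !Gamma_app; in_Q. rewrite IH. reflexivity.
  - rewrite !Gamma_app. apply Gamma_commute.
  - destruct s; cbn [negb]; unfold comm_gen; cbv beta iota; in_Q; group_eq.
  - destruct s; unfold comm_gen; cbv beta iota; in_Q; rewrite (bcomm_ab_compat a a' b b' ha hb);
      reflexivity.
  - destruct s; unfold comm_gen; cbv beta iota; in_Q; rewrite (bcomm_mull a a' b); [group_eq|].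
    rewrite (bcomm_commute a a' b b). group_eq.
  - destruct s; unfold comm_gen; cbv beta iota; in_Q; rewrite (bcomm_mulr a b b'); [group_eq|].
    rewrite (bcomm_commute a a b b'). group_eq.
Qed.

End GammaCompat.

(** * Injectivity *)

Lemma shom_nabla_split {A K : sgrp} `{SetoidGroup A} `{SetoidGroup K} (phi : A -> K) :
  is_shom phi -> (forall x y : K, sgeq (smul x y) (smul y x)) ->
  forall u : FP A A, sgeq (phi (nabla u)) (smul (phi (r1 u)) (phi (r2 u))).
Proof.
  intros hphi hC u. induction u as [|[a|a] u IH].
  - change (sgeq (phi sone) (smul (phi sone) (phi sone))).
    rewrite (shom_one hphi). group_eq.
  - change (sgeq (phi (smul a (nabla u)))
                 (smul (phi (smul a (r1 u))) (phi (smul sone (r2 u))))).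
    rewrite !(shom_mul hphi), IH, (shom_one hphi). group_eq.
  - change (sgeq (phi (smul a (nabla u)))
                 (smul (phi (smul sone (r1 u))) (phi (smul a (r2 u))))).
    rewrite !(shom_mul hphi), IH, (shom_one hphi).
    transitivity (smul (smul (phi a) (phi (r1 u))) (phi (r2 u))); [group_eq|].
    rewrite (hC (phi a)). group_eq.
Qed.

Lemma r1_fpmap_id {A B B' : sgrp} (g : B -> B') (w : FP A B) :
  r1 (fpmap (fun a => a) g w) = r1 w.
Proof. unfold r1. rewrite eval2_fpmap. reflexivity. Qed.

Lemma r2_fpmap_id {A A' B : sgrp} (f : A -> A') (w : FP A B) :
  r2 (fpmap f (fun b => b) w) = r2 w.
Proof. unfold r2. rewrite eval2_fpmap. reflexivity. Qed.

Lemma r1_fpmap {A B A' B' : sgrp} `{SetoidGroup A'} (f : A -> A') (g : B -> B') :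
  is_shom f -> forall w, sgeq (r1 (fpmap f g w)) (f (r1 w)).
Proof.
  intros hf w. unfold r1. rewrite eval2_fpmap, (shom_eval2 f _ _ hf).
  apply eval2_ext; intros; [reflexivity | symmetry; apply (shom_one hf)].
Qed.

Lemma r2_fpmap {A B A' B' : sgrp} `{SetoidGroup B'} (f : A -> A') (g : B -> B') :
  is_shom g -> forall w, sgeq (r2 (fpmap f g w)) (g (r2 w)).
Proof.
  intros hg w. unfold r2. rewrite eval2_fpmap, (shom_eval2 g _ _ hg).
  apply eval2_ext; intros; [symmetry; apply (shom_one hg) | reflexivity].
Qed.

Section Psi.
Context (G H : group).
Notation F := (FP (to_s G) (to_s H)).
Notation T := (Tens (ab G) (ab H)).
Notation GG := (FP (to_s G) (to_s G)).
Notation HH := (FP (to_s H) (to_s H)).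
Notation st := (@stens (ab G) (ab H)).

Lemma stens_shoml (b : to_s H) : is_shom (fun a : to_s G => st a b).
Proof.
  apply shom_of_mul; [intros x y e; rewrite (to_s_eq e); reflexivity|].
  intros x y. exact (t_addl (A := ab G) (B := ab H) true x y b).
Qed.

Lemma stens_shomr (a : to_s G) : is_shom (fun b : to_s H => st a b).
Proof.
  apply shom_of_mul; [intros x y e; rewrite (to_s_eq e); reflexivity|].
  intros x y. exact (t_addr (A := ab G) (B := ab H) true a x y).
Qed.

(* [Psi w] sums [g (x) r2(w')] over the factorizations [w = u (i1 g) w'].
   It is a crossed homomorphism (see [Psi_app]), hence a homomorphism on the
   kernel of [r1]; it kills N1 and N2 and inverts Gamma. *)
Fixpoint Psi (w : F) : T :=
  match w with
  | [] => sone
  | inl g :: w' => smul (st g (r2 w')) (Psi w')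
  | inr _ :: w' => Psi w'
  end.

Lemma Psi_one : Psi sone = sone.
Proof. reflexivity. Qed.

Lemma Psi_app (u v : F) : sgeq (Psi (u ++ v)) (smul (smul (Psi u) (Psi v)) (st (r1 u) (r2 v))).
Proof.
  induction u as [|[g|h] u IH]; cbn [Psi app].
  - change (r1 []) with (@sone (to_s G)). rewrite (shom_one (stens_shoml (r2 v))). group_eq.
  - rewrite (to_s_eq (shom_mul r2_shom u v : sgeq (r2 (u ++ v)) _)),
      (shom_mul (stens_shomr g)), IH.
    change (r1 (inl g :: u)) with (@smul (to_s G) g (r1 u)).
    rewrite (shom_mul (stens_shoml (r2 v))).
    set (A := st g (r2 u)). set (B := st g (r2 v)). set (C := st (r1 u) (r2 v)).
    transitivity (smul A (smul (smul B (smul (Psi u) (Psi v))) C)); [group_eq|].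
    rewrite (Tens_mulC B). group_eq.
  - change (r1 (inr h :: u)) with (gmul G (gone G) (r1 u)). rewrite gmul1. exact IH.
Qed.

Lemma Psi_compat (x y : F) : sgeq x y -> sgeq (Psi x) (Psi y).
Proof.
  intro e. induction e as [| | |u v w1 w2 e IH|a a' e|b b' e| | |a a'|b b'].
  - reflexivity.
  - symmetry; assumption.
  - etransitivity; eassumption.
  - assert (E1 : r1 w1 = r1 w2) by exact (shom_compat r1_shom _ _ e).
    assert (E2 : r2 (w1 ++ v) = r2 (w2 ++ v)) by
      exact (shom_compat r2_shom _ _ (fp_rel_appr v w1 w2 e)).
    rewrite !Psi_app, IH, E1, E2. reflexivity.
  - rewrite (to_s_eq e). reflexivity.
  - reflexivity.
  - cbn [Psi]. change (r2 []) with (@sone (to_s H)).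
    rewrite (shom_one (stens_shomr sone)). group_eq.
  - reflexivity.
  - cbn [Psi]. change [inl a'] with (i1 (to_s H) a').
    rewrite (to_s_eq (r2_i1 (B := to_s H) a')). change (r2 []) with (@sone (to_s H)).
    rewrite !(shom_one (stens_shomr _)). group_eq.
  - reflexivity.
Qed.

Lemma Psi_inv (x : F) : sgeq (r1 x) sone -> sgeq (Psi (sinv x)) (sinv (Psi x)).
Proof.
  intro h1. apply sg_eq_inv_of_mul.
  transitivity (Psi (smul x (sinv x))).
  - change (smul x (sinv x)) with (x ++ sinv x).
    rewrite Psi_app, (to_s_eq h1), (shom_one (stens_shoml _)). group_eq.
  - apply (Psi_compat _ sone), sg_mulVr.
Qed.

Lemma Psi_mul_ker (x y : F) : sgeq (r1 x) sone ->
  sgeq (Psi (smul x y)) (smul (Psi x) (Psi y)).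
Proof.
  intro h1. change (smul x y) with (x ++ y).
  rewrite Psi_app, (to_s_eq h1), (shom_one (stens_shoml _)). group_eq.
Qed.

Lemma Psi_bcomm (a : to_s G) (b : to_s H) : sgeq (Psi (bcomm G H a b)) (st a b).
Proof.
  change (Psi (bcomm G H a b)) with
    (smul (st a (@smul (to_s H) b (smul sone (smul (sinv b) sone))))
          (smul (st (sinv a) (@smul (to_s H) (sinv b) sone)) sone)).
  assert (E1 : @smul (to_s H) b (smul sone (smul (sinv b) sone)) = sone)
    by (apply to_s_eq; group_eq).
  assert (E2 : @smul (to_s H) (sinv b) sone = sinv b) by (apply to_s_eq; group_eq).
  rewrite E1, E2, (shom_one (stens_shomr a)), (shom_inv (stens_shoml _)),
    (shom_inv (stens_shomr a)).
  group_eq.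
Qed.

Lemma Psi_Gamma (t : T) : sgeq (Psi (Gamma G H t)) t.
Proof.
  induction t as [|[[s a] b] t IH]; [reflexivity|].
  cbn [Gamma]. destruct (Bker_comm_gen G H s a b) as [h1 _].
  rewrite Psi_mul_ker, IH by exact h1.
  change ((s, a, b) :: t) with (smul (s := T) [(s, a, b)] t).
  apply sg_mulc; [|reflexivity].
  destruct s; unfold comm_gen; [apply Psi_bcomm|].
  rewrite Psi_inv by (destruct (Bker_comm_gen G H true a b); assumption).
  rewrite Psi_bcomm. reflexivity.
Qed.

Lemma Psi_fpmap_nabla_l (z : FP GG (to_s H)) :
  sgeq (Psi (fpmap (@nabla (to_s G)) (fun h => h) z))
       (smul (Psi (fpmap (@r1 _ _) (fun h => h) z)) (Psi (fpmap (@r2 _ _) (fun h => h) z))).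
Proof.
  induction z as [|[u|h] z IH]; [reflexivity| |exact IH].
  change (fpmap ?f ?g (inl u :: z)) with (inl (f u) :: fpmap f g z). cbn [Psi].
  rewrite !r2_fpmap_id, IH,
    (shom_nabla_split (fun g : to_s G => st g (r2 z)) (stens_shoml _) (@Tens_mulC _ _)).
  set (P1 := Psi (fpmap _ _ z)). set (P2 := Psi (fpmap _ _ z)).
  transitivity (smul (st (r1 u) (r2 z)) (smul (smul (st (r2 u) (r2 z)) P1) P2)); [group_eq|].
  rewrite (Tens_mulC (st (r2 u) (r2 z)) P1). group_eq.
Qed.

Lemma Psi_fpmap_nabla_r (z : FP (to_s G) HH) :
  sgeq (Psi (fpmap (fun g => g) (@nabla (to_s H)) z))
       (smul (Psi (fpmap (fun g => g) (@r1 _ _) z)) (Psi (fpmap (fun g => g) (@r2 _ _) z))).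
Proof.
  induction z as [|[g|v] z IH]; [reflexivity| |exact IH].
  change (fpmap ?f ?k (inl g :: z)) with (inl (f g) :: fpmap f k z). cbn [Psi].
  rewrite (to_s_eq (r2_fpmap (fun g : to_s G => g) _ nabla_shom z)),
    (to_s_eq (r2_fpmap (fun g : to_s G => g) _ r1_shom z)),
    (to_s_eq (r2_fpmap (fun g : to_s G => g) _ r2_shom z)), IH,
    (shom_nabla_split (fun b : to_s H => st g b) (stens_shomr g) (@Tens_mulC _ _)).
  set (P1 := Psi (fpmap _ _ z)). set (P2 := Psi (fpmap _ _ z)).
  set (X2 := st g (r2 (r2 z))).
  transitivity (smul (st g (r1 (r2 z))) (smul (smul X2 P1) P2)); [group_eq|].
  rewrite (Tens_mulC X2 P1). group_eq.
Qed.

Lemma N1_Psi_trivial (x : F) : N1 x -> sgeq (r1 x) sone /\ sgeq (Psi x) sone.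
Proof.
  intros [z [[hz1 _] [hz3 [hz4 hz5]]]]. split.
  - rewrite (shom_compat r1_shom _ _ hz5), (r1_fpmap _ _ nabla_shom),
      (shom_compat nabla_shom _ _ hz1).
    apply (shom_one nabla_shom).
  - rewrite (Psi_compat _ _ hz5), Psi_fpmap_nabla_l, (Psi_compat _ _ hz3),
      (Psi_compat _ _ hz4), Psi_one.
    apply sg_mul1.
Qed.

Lemma N2_Psi_trivial (x : F) : N2 x -> sgeq (r1 x) sone /\ sgeq (Psi x) sone.
Proof.
  intros [z [[hz1 _] [hz3 [hz4 hz5]]]]. split.
  - rewrite (shom_compat r1_shom _ _ hz5), r1_fpmap_id. exact hz1.
  - rewrite (Psi_compat _ _ hz5), Psi_fpmap_nabla_r, (Psi_compat _ _ hz3),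
      (Psi_compat _ _ hz4), Psi_one.
    apply sg_mul1.
Qed.

Lemma sgen_N12_Psi_trivial (x : F) : sgen (N12 G H) x -> sgeq (r1 x) sone /\ sgeq (Psi x) sone.
Proof.
  intro h.
  induction h as [x [h|h]| |x y _ [hx1 hx2] _ [hy1 hy2]|x _ [hx1 hx2]|x y _ [hx1 hx2] e].
  - apply N1_Psi_trivial, h.
  - apply N2_Psi_trivial, h.
  - split; reflexivity.
  - split.
    + rewrite (shom_mul r1_shom), hx1, hy1. apply sg_mul1.
    + rewrite Psi_mul_ker, hx2, hy2 by exact hx1. apply sg_mul1.
  - split.
    + rewrite (shom_inv r1_shom), hx1. apply sg_inv1.
    + rewrite Psi_inv, hx2 by exact hx1. apply sg_inv1.
  - split.
    + rewrite <- (shom_compat r1_shom _ _ e). exact hx1.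
    + rewrite <- (Psi_compat _ _ e). exact hx2.
Qed.

Lemma Gamma_inj (t t' : T) : T11rel G H (Gamma G H t) (Gamma G H t') -> sgeq t t'.
Proof.
  intro h. apply sgen_N12_Psi_trivial in h as [_ h].
  destruct (Bker_Gamma G H t) as [h1 _]. destruct (Bker_Gamma G H t') as [h1' _].
  rewrite Psi_mul_ker, Psi_inv, !Psi_Gamma in h by assumption.
  transitivity (smul (smul t (sinv t')) t'); [group_eq|]. rewrite h. group_eq.
Qed.

End Psi.

(** * Surjectivity, naturality and the theorem *)

Lemma Gamma_onto_Bker (G H : group) (x : FP (to_s G) (to_s H)) :
  Bker x -> exists t, sgeq (Gamma G H t) x.
Proof.
  intros [h1 h2]. destruct (FP_decomp G H x) as [t ht]. exists t.
  rewrite ht, h1, h2, (shom_one i1_shom), (shom_one i2_shom). group_eq.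
Qed.

Lemma Gamma_stens (G H : group) (g : G) (h : H) :
  sgeq (Gamma G H (@stens (ab G) (ab H) g h)) (bcomm G H g h).
Proof. apply sg_mulr1. Qed.

Lemma fpmap_Gamma (G H G' H' : group) (f : hom G G') (k : hom H H')
  (t : Tens (ab G) (ab H)) :
  sgeq (@fpmap (to_s G) (to_s H) (to_s G') (to_s H') f k (Gamma G H t))
       (Gamma G' H' (tmap f k t)).
Proof.
  pose proof (fpmap_shom _ _ (hom_shom _ _ f) (hom_shom _ _ k)) as hF.
  induction t as [|[[s a] b] t IH]; [reflexivity|].
  cbn [Gamma tmap map]. rewrite (shom_mul hF), IH.
  destruct s; unfold comm_gen, bcomm, scomm; push_shom hF; reflexivity.
Qed.

Theorem proposition2p3 :
  exists Gamma : forall G H : group,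
      Tens (ab G) (ab H) -> FP (to_s G) (to_s H),
    (forall G H : group,
       (forall t t' : Tens (ab G) (ab H),
          sgeq t t' -> T11rel G H (Gamma G H t) (Gamma G H t')) /\
       (forall t, Bker (Gamma G H t)) /\
       (forall t t' : Tens (ab G) (ab H),
          T11rel G H (Gamma G H (smul t t')) (smul (Gamma G H t) (Gamma G H t'))) /\
       (forall t t' : Tens (ab G) (ab H),
          T11rel G H (Gamma G H t) (Gamma G H t') -> sgeq t t') /\
       (forall x : FP (to_s G) (to_s H),
          Bker x -> exists t, T11rel G H (Gamma G H t) x) /\
       (forall (g : G) (h : H),
          T11rel G H (Gamma G H (@stens (ab G) (ab H) g h))
                 (scomm (@i1 (to_s G) (to_s H) g) (@i2 (to_s G) (to_s H) h)))) /\
    (forall (G H G' H' : group) (f : hom G G') (k : hom H H')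
            (t : Tens (ab G) (ab H)),
       T11rel G' H' (Gamma G' H' (tmap f k t))
              (@fpmap (to_s G) (to_s H) (to_s G') (to_s H') f k (Gamma G H t))).
Proof.
  exists Gamma. split.
  - intros G H. split; [|split; [|split; [|split; [|split]]]].
    + apply Gamma_compat.
    + apply Bker_Gamma.
    + intros t t'. apply T11rel_of_sgeq. change (smul t t') with (t ++ t').
      rewrite Gamma_app. reflexivity.
    + apply Gamma_inj.
    + intros x hx. destruct (Gamma_onto_Bker G H x hx) as [t ht].
      exists t. apply T11rel_of_sgeq, ht.
    + intros g h. apply T11rel_of_sgeq, Gamma_stens.
  - intros G H G' H' f k t. apply T11rel_of_sgeq. symmetry. apply fpmap_Gamma.
Qed.
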